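(* Let $F\subset\mathbb R^d$ be a bounded set with Minkowski dimension $s$ whose Minkowski content $\mathcal M(F)=\lim_{\varepsilon\searrow0}\varepsilon^{s-d}\mathrm{vol}_d(F_\varepsilon)\in(0,\infty)$ exists. Let $\varepsilon_1>\varepsilon_2>\dots>0$, $x_j=-\log\varepsilon_j$, and suppose $y_{j}=\log\mathcal M(F)+s\,x_j+\delta_j$, $j\in\mathbb N$, where the $\delta_j$ have mean zero, finite positive variance, and covariance matrices $Q_n$ of $(\delta_1,\dots,\delta_n)$ satisfying $0<\inf_n\nu_{\min}(Q_n)\le\sup_n\nu_{\max}(Q_n)<\infty$. Suppose $\widetilde S_n^2=\Theta(n^\gamma)$ and $\bar x_n=O(n^{\mu/2})$ for constants $\gamma,\mu\ge0$ with $\alpha:=1-\max\{\gamma,\mu\}-2\max\{0,\mu-\gamma\}>0$. Let $(\hat\beta^{(n)},\hat s^{(n)})$ minimize $\sum_{j=1}^n(y_j-\beta-sx_j)^2$ and $\hat{\mathcal M}^{(n)}=\exp(\hat\beta^{(n)})$. Then for every $\varepsilon>0$, $P(|\hat s^{(n)}-s|>\varepsilon)=O(n^{-\alpha})$ and $P(|\hat{\mathcal M}^{(n)}-\mathcal M(F)|>\varepsilon)=O(n^{-\alpha})$ as $n\to\infty$.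
   Context: $F_\varepsilon=\{x:\operatorname{dist}(x,F)\le\varepsilon\}$; the observations are intended as $y_j=\log(\varepsilon_j^{-d}\mathrm{vol}_d(F_{\varepsilon_j}))$. $\bar x_n=\frac1n\sum_{i\le n}x_i$, $\widetilde S_n^2=\frac1n\sum_{i\le n}(x_i-\bar x_n)^2$; $\nu_{\min},\nu_{\max}$ are extreme eigenvalues; $\Theta$ means bounded above and below by positive constant multiples eventually. *)

From HB Require Import structures.
From mathcomp Require Import all_boot all_order all_algebra.
From mathcomp Require Import all_classical all_reals all_analysis.
Set Implicit Arguments. Unset Strict Implicit. Unset Printing Implicit Defensive.
Import Order.TTheory GRing.Theory Num.Theory.
Import numFieldNormedType.Exports.
Local Open Scope classical_set_scope.
Local Open Scope ring_scope.

Section Defs.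
Variable R : realType.

Definition eucl_dist (d : nat) (x y : 'rV[R]_d) : R :=
  Num.sqrt (\sum_(i < d) (x ord0 i - y ord0 i) ^+ 2).

(** dist(x, F) = inf_{y in F} |x - y| (extended real, +oo if F is empty). *)
Definition dist_set (d : nat) (x : 'rV[R]_d) (F : set 'rV[R]_d) : \bar R :=
  ereal_inf [set (eucl_dist x y)%:E | y in F].

Definition nbhd_set (d : nat) (F : set 'rV[R]_d) (e : R) : set 'rV[R]_d :=
  [set x | (dist_set x F <= e%:E)%E].

Definition box (d : nat) (a b : 'I_d -> R) : set 'rV[R]_d :=
  [set x | forall i, a i <= x ord0 i <= b i].

Definition vol (d : nat) (A : set 'rV[R]_d) : \bar R :=
  ereal_inf [set v | exists a b : nat -> 'I_d -> R,
     [/\ (forall k i, a k i <= b k i),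
         A `<=` \bigcup_k box (a k) (b k) &
         v = (\sum_(0 <= k <oo) (\prod_(i < d) (b k i - a k i))%:E)%E]].

Definition bounded_Rd (d : nat) (F : set 'rV[R]_d) : Prop :=
  exists r : R, forall x, F x -> forall i, `|x ord0 i| <= r.

Definition minkowski_dim (d : nat) (F : set 'rV[R]_d) (s : R) : Prop :=
  (fun e : R => d%:R - ln (fine (vol (nbhd_set F e))) / ln e) @ 0^'+ --> s.

Definition minkowski_content (d : nat) (F : set 'rV[R]_d) (s M : R) : Prop :=
  (fun e : R => ((e `^ (s - d%:R))%:E * vol (nbhd_set F e))%E) @ 0^'+ --> M%:E.

(** Regression quantities (indices j = 0, ..., n-1 stand for 1, ..., n). *)
Definition xbar (x : nat -> R) (n : nat) : R := (\sum_(j < n) x j) / n%:R.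

Definition S2tilde (x : nat -> R) (n : nat) : R :=
  (\sum_(j < n) (x j - xbar x n) ^+ 2) / n%:R.

Definition lsq_obj (x y : nat -> R) (n : nat) (beta s : R) : R :=
  \sum_(j < n) (y j - beta - s * x j) ^+ 2.

Definition cov_matrix (dT : measure_display) (T : measurableType dT)
  (P : probability T R) (delta : nat -> T -> R) (n : nat) : 'M[R]_n :=
  \matrix_(i < n, j < n) fine (covariance P (delta i) (delta j)).

End Defs.

From HB Require Import structures.
From mathcomp Require Import all_boot all_order all_algebra.
From mathcomp Require Import all_classical all_reals all_analysis.
From mathcomp Require Import measurable_realfun complex ring lra.
Import Order.TTheory GRing.Theory Num.Theory.
Import numFieldNormedType.Exports.
Local Open Scope classical_set_scope.
Local Open Scope ring_scope.

(* The least squares errors are linear in the noise: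
     s^ - s = sum_j (x_j - xbar) delta_j / Sxx,
     beta^ - log M = sum_j (1/n - xbar (x_j - xbar) / Sxx) delta_j,
   where Sxx = sum_j (x_j - xbar)^2 = n S~^2.  The variance of sum_j a_j delta_j
   is a Q_n a^T <= nu_max |a|^2, so Chebyshev bounds both tail probabilities by
   a multiple of |a|^2, which is 1/Sxx for the slope and at most
   2/n + 2 xbar^2/Sxx for the intercept.  The growth assumptions give
   Sxx >= c n^(1+gamma) and xbar^2 <= C n^mu, so both are O(n^-alpha).  Finally
   exp is Lipschitz near log M, so M^ is close to M when beta^ is close to
   log M. *)

Section QuadraticForm.
Variable R : rcfType.
Local Open Scope complex_scope.
Local Open Scope sesquilinear_scope.

(* Diagonalize the complexification of Q by the spectral theorem. *)
Lemma symmetric_quadform_le n (Q : 'M[R]_n) (C : R) : Q^T = Q ->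
  (forall a, eigenvalue Q a -> a <= C) ->
  forall v : 'rV_n, (v *m Q *m v^T) 0 0 <= C * (v *m v^T) 0 0.
Proof.
move=> Qsym HC v.
pose f := real_complex R.
pose A := Q ^ f.
have Aherm : A \is hermsymmx.
  apply: realsym_hermsym.
    apply/is_hermitianmxP; rewrite expr0 scale1r; apply/matrixP => i j.
    by rewrite !mxE -[in LHS]Qsym mxE.
  apply/mxOverP => i j; rewrite mxE; apply/complex_realP; by exists (Q i j).
pose Pm := spectralmx A; pose D := spectral_diag A.
have PU : Pm \is unitarymx := spectral_unitarymx A.
have Punit : Pm \in unitmx := unitarymx_unit PU.
have AE : A = Pm^t* *m diag_mx D *m Pm.
  by rewrite -invmx_unitary //; apply/orthomx_spectralP; exact: hermitian_normalmx.
have Dreal := hermitian_spectral_diag_real Aherm.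
have D_le : forall i, D 0 i <= C%:C.
  move=> i; have /complex_realP [r Dr] : D 0 i \is Num.real by apply: (mxOverP Dreal).
  rewrite Dr lecR; apply: HC.
  rewrite -(eigenvalue_map f); apply/eigenvalueP; exists (row i Pm); last first.
    apply/eqP => Hr0.
    have : row i (Pm *m invmx Pm) = 0 by rewrite row_mul Hr0 mul0mx.
    rewrite mulmxV // => /rowP /(_ i); rewrite !mxE eqxx /= => /eqP.
    by rewrite oner_eq0.
  rewrite -/A AE !mulmxA -row_mul.
  have -> : Pm *m Pm^t* = 1%:M by apply/unitarymxP.
  by rewrite row1 -rowE row_diag_mx -scalemxAl -rowE Dr.
pose vc := v ^ f.
have map_trmx : forall m (u : 'M[R]_(1,m)), map_mx f (u^T) = (map_mx f u)^t*.
  move=> m u; apply/matrixP => i j; rewrite !mxE.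
  by rewrite conj_Creal //; apply/complex_realP; eexists.
have PtP : Pm^t* *m Pm = 1%:M by rewrite -invmx_unitary // mulVmx.
pose w := vc *m Pm^t*.
have wt : Pm *m vc^t* = w^t* by rewrite /w trmx_mul map_mxM trmxCK.
have quadE : ((v *m Q *m v^T) 0 0)%:C = (w *m diag_mx D *m w^t*) 0 0.
  rewrite (_ : _%:C = (map_mx f (v *m Q *m v^T)) 0 0); last by rewrite [RHS]mxE.
  rewrite !map_mxM map_trmx -/vc -/A AE.
  by rewrite !mulmxA -[_ *m Pm *m _]mulmxA wt.
have normE : ((v *m v^T) 0 0)%:C = (w *m w^t*) 0 0.
  rewrite (_ : _%:C = (map_mx f (v *m v^T)) 0 0); last by rewrite [RHS]mxE.
  rewrite !map_mxM map_trmx -/vc.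
  by rewrite /w -mulmxA -wt !mulmxA -[vc *m _ *m _]mulmxA PtP mulmx1.
rewrite -lecR rmorphM /= quadE normE !mxE mulr_sumr; apply: ler_sum => j _.
rewrite mul_mx_diag !mxE -mulrA [D 0 j * _]mulrC mulrA.
rewrite [C%:C * _]mulrC; apply: ler_wpM2l; first by rewrite -normCK exprn_ge0.
exact: D_le.
Qed.

End QuadraticForm.

Arguments symmetric_quadform_le {R n Q C}.

Section NormLevelSets.
Context d (T : measurableType d) (R : realType) (g : T -> R) (r : R).
Hypothesis mg : measurable_fun setT g.

Let mnormg : measurable_fun setT (fun w => `|g w|).
Proof. by apply: measurableT_comp => //; exact: normr_measurable. Qed.

Lemma measurable_normr_gtr_set : measurable [set w | r < `|g w|].
Proof.
have := mnormg measurableT _ (measurable_itv `]r, +oo[).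
rewrite setTI; congr measurable; apply/seteqP; split => w /=;
  by rewrite in_itv /= andbT.
Qed.

Lemma measurable_normr_ger_set : measurable [set w | r <= `|g w|].
Proof.
have := mnormg measurableT _ (measurable_itv `[r, +oo[).
rewrite setTI; congr measurable; apply/seteqP; split => w /=;
  by rewrite in_itv /= andbT.
Qed.

End NormLevelSets.

Section NoiseCombination.
Context d (T : measurableType d) (R : realType) (P : probability T R).
Variable delta : nat -> {RV P >-> R}.
Hypothesis delta_L2 : forall j, (delta j : T -> R) \in Lfun P 2%:E.
Hypothesis delta_centered : forall j, ('E_P[delta j] = 0)%E.

Definition noise_comb (n : nat) (a : nat -> R) : T -> R :=
  fun w => \sum_(j < n) a j * delta j w.

Let Pfin : P setT \is a fin_num := fin_num_measure P _ measurableT.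

Let delta_L1 j : (delta j : T -> R) \in Lfun P 1.
Proof. exact: (Lfun_subset12 Pfin). Qed.

Lemma noise_comb0 a : noise_comb 0 a = cst 0.
Proof. by apply/funext => w; rewrite /noise_comb big_ord0. Qed.

Lemma noise_combS n a :
  noise_comb n.+1 a = (noise_comb n a \+ a n \o* (delta n : T -> R))%R.
Proof. by apply/funext => w; rewrite /noise_comb big_ord_recr /= mulrC. Qed.

Lemma measurable_noise_comb n a : measurable_fun setT (noise_comb n a).
Proof.
elim: n => [|n IH]; first by rewrite noise_comb0.
by rewrite noise_combS; apply: measurable_funD => //; apply: measurable_funM.
Qed.

Lemma noise_comb_L2 n a : noise_comb n a \in Lfun P 2%:E.
Proof.
elim: n => [|n IH]; first by rewrite noise_comb0 Lfun_cst.
rewrite noise_combS; apply: rpredD => //; first by rewrite lee_fin ler1n.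
by move=> ?; apply: Lfun_scale => //; rewrite ler1n.
Qed.

Lemma expectation_noise_comb n a : ('E_P[noise_comb n a] = 0)%E.
Proof.
elim: n => [|n IH]; first by rewrite noise_comb0 expectation_cst.
rewrite noise_combS expectationD ?IH ?expectationZl ?delta_centered ?mule0 ?adde0 //.
- exact: (Lfun_subset12 Pfin (noise_comb_L2 n a)).
- exact: Lfun_scale.
Qed.

Lemma covariance_noise_comb_l n a (Y : T -> R) : Y \in Lfun P 2%:E ->
  covariance P (noise_comb n a) Y =
  (\sum_(j < n) a j * fine (covariance P (delta j) Y))%:E.
Proof.
move=> Y2; have Y1 := Lfun_subset12 Pfin Y2.
elim: n => [|n IH]; first by rewrite noise_comb0 covariance_cst_l big_ord0.
rewrite noise_combS covarianceDl ?noise_comb_L2 //; last first.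
  by apply: Lfun_scale => //; rewrite ler1n.
rewrite covarianceZl ?Lfun2_mul_Lfun1 // IH big_ord_recr /= EFinD EFinM fineK //.
by apply: covariance_fin_num; rewrite ?Lfun2_mul_Lfun1.
Qed.

Lemma variance_noise_comb n a : 'V_P[noise_comb n a] =
  (\sum_(i < n) a i * \sum_(j < n) a j * fine (covariance P (delta j) (delta i)))%:E.
Proof.
rewrite /variance covariance_noise_comb_l ?noise_comb_L2 //; congr EFin.
by apply: eq_bigr => i _; rewrite covarianceC covariance_noise_comb_l.
Qed.

Lemma variance_noise_comb_le n a C :
  (forall b, eigenvalue (cov_matrix P (fun j => delta j : T -> R) n) b -> b <= C) ->
  ('V_P[noise_comb n a] <= (C * \sum_(j < n) a j ^+ 2)%:E)%E.
Proof.
move=> HC; rewrite variance_noise_comb lee_fin.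
pose v := \row_(j < n) a j.
have Qsym : (cov_matrix P (fun j => delta j : T -> R) n)^T =
            cov_matrix P (fun j => delta j : T -> R) n.
  by apply/matrixP => i j; rewrite !mxE covarianceC.
have := symmetric_quadform_le Qsym HC v.
rewrite !mxE; congr (_ <= _).
  apply: eq_bigr => i _; rewrite /v !mxE mulrC; congr (_ * _).
  by apply: eq_bigr => j _; rewrite !mxE.
by congr (_ * _); apply: eq_bigr => j _; rewrite /v !mxE expr2.
Qed.

Lemma chebyshev_noise_comb n a (r C : R) : 0 < r ->
  (forall b, eigenvalue (cov_matrix P (fun j => delta j : T -> R) n) b -> b <= C) ->
  (P [set w | (r < `|noise_comb n a w|)%R] <= (r ^- 2 * (C * \sum_(j < n) a j ^+ 2))%:E)%E.
Proof.
move=> r0 HC.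
have mZ : noise_comb n a \in mfun by rewrite inE; exact: measurable_noise_comb.
pose Z : {RV P >-> R} := mfun_Sub mZ.
have ZE : (Z : T -> R) = noise_comb n a by rewrite mfun_valP.
apply: (@le_trans _ _ (P [set w | (r <= `|Z w - fine 'E_P[Z]|)%R])).
  have EZ : fine 'E_P[Z] = 0 by rewrite ZE expectation_noise_comb.
  rewrite EZ ZE; apply: le_measure; rewrite ?inE.
  - exact: measurable_normr_gtr_set (measurable_noise_comb n a).
  - under eq_set do rewrite subr0.
    exact: measurable_normr_ger_set (measurable_noise_comb n a).
  - by move=> w /= /ltW; rewrite subr0.
apply: le_trans (chebyshev Z r0) _; rewrite EFinM.
apply: lee_wpmul2l; first by rewrite lee_fin invr_ge0 exprn_ge0 // ltW.
by rewrite ZE; exact: variance_noise_comb_le.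
Qed.

End NoiseCombination.

Arguments noise_comb {d T R P} delta n a.
Arguments measurable_noise_comb {d T R P delta}.
Arguments chebyshev_noise_comb {d T R P delta} _ _ {n} a {r C}.

Section LeastSquares.
Context {R : realType}.
Implicit Types (x e y : nat -> R) (n : nat).

Definition Sxx x n : R := \sum_(j < n) (x j - xbar x n) ^+ 2.

Definition intercept_weight x n (j : nat) : R :=
  n%:R^-1 - xbar x n * (x j - xbar x n) / Sxx x n.

Lemma sum1_ord n : \sum_(j < n) (1 : R) = n%:R.
Proof. by rewrite sumr_const card_ord. Qed.

Lemma sum_lin3 n (a b c : R) (f g h : nat -> R) :
  \sum_(j < n) (a * f j + b * g j + c * h j) =
  a * \sum_(j < n) f j + b * \sum_(j < n) g j + c * \sum_(j < n) h j.
Proof. by rewrite !big_split /= !mulr_sumr. Qed.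

Lemma quad_ge0_lin0 {A B : R} :
  0 <= B -> (forall t, 0 <= A * t + B * t ^+ 2) -> A = 0.
Proof.
move=> B0 H; have B1 : B + 1 != 0 by rewrite gt_eqF // ltr_wpDl.
have := H (- A / (B + 1)).
have -> : A * (- A / (B + 1)) + B * (- A / (B + 1)) ^+ 2 = - (A / (B + 1)) ^+ 2.
  by field.
rewrite oppr_ge0 => h; have /eqP : (A / (B + 1)) ^+ 2 = 0.
  by apply/eqP; rewrite eq_le h sqr_ge0.
by rewrite sqrf_eq0 mulf_eq0 invr_eq0 (negbTE B1) orbF => /eqP.
Qed.

Lemma sum_sqrB_scale n (r z : nat -> R) (t : R) :
  \sum_(j < n) (r j - t * z j) ^+ 2 =
  \sum_(j < n) r j ^+ 2 + ((-2) * \sum_(j < n) r j * z j) * t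
     + (\sum_(j < n) z j ^+ 2) * t ^+ 2.
Proof.
by rewrite mulr_sumr !mulr_suml -!big_split /=; apply: eq_bigr => j _ /=; ring.
Qed.

(* A minimum along the line (b0, s0) + t (u, v) has zero derivative at t = 0. *)
Lemma lsq_first_order x y n b0 s0 (u v : R) :
  (forall b s', lsq_obj x y n b0 s0 <= lsq_obj x y n b s') ->
  \sum_(j < n) (y j - b0 - s0 * x j) * (u + v * x j) = 0.
Proof.
move=> Hmin; set r := fun j => y j - b0 - s0 * x j.
have B0 : 0 <= \sum_(j < n) (u + v * x j) ^+ 2 by apply: sumr_ge0 => j _; exact: sqr_ge0.
suff /eqP : (-2) * \sum_(j < n) r j * (u + v * x j) = 0.
  by rewrite mulf_eq0 oppr_eq0 pnatr_eq0 /= => /eqP.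
apply: (quad_ge0_lin0 B0) => t.
have := Hmin (b0 + t * u) (s0 + t * v); rewrite /lsq_obj.
have -> : \sum_(j < n) (y j - (b0 + t * u) - (s0 + t * v) * x j) ^+ 2 =
          \sum_(j < n) (r j - t * (u + v * x j)) ^+ 2.
  by apply: eq_bigr => j _; rewrite /r; congr (_ ^+ 2); ring.
by rewrite (sum_sqrB_scale _ r (fun j => u + v * x j)) -addrA lerDl.
Qed.

Lemma Sxx_growth x n (c g : R) : (0 < n)%N -> 0 < c ->
  c * n%:R `^ g <= S2tilde x n -> 0 < c * n%:R * n%:R `^ g <= Sxx x n.
Proof.
move=> n0 c0; have n_gt0 : (0 : R) < n%:R by rewrite ltr0n.
rewrite /S2tilde -/(Sxx x n) ler_pdivlMr // mulrAC => ->; rewrite andbT.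
by apply: mulr_gt0; [exact: mulr_gt0 | exact: powR_gt0].
Qed.

Section Errors.
Variables (x e : nat -> R) (n : nat) (L s b0 s0 : R).
Hypothesis n_gt0 : (0 < n)%N.
Hypothesis Sxx_gt0 : 0 < Sxx x n.
Hypothesis lsq_min : forall b s',
  lsq_obj x (fun j => L + s * x j + e j) n b0 s0
    <= lsq_obj x (fun j => L + s * x j + e j) n b s'.

Let n_neq0 : (n%:R : R) != 0. Proof. by rewrite pnatr_eq0 -lt0n. Qed.

Let lsq_mean_eq :
  (L - b0) * n%:R + (s - s0) * \sum_(j < n) x j + 1 * \sum_(j < n) e j = 0.
Proof.
rewrite -[RHS](@lsq_first_order _ _ _ _ _ 1 0 lsq_min) -sum1_ord.
rewrite -(sum_lin3 _ _ _ _ (fun _ => 1) x e).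
by apply: eq_bigr => j _ /=; ring.
Qed.

Lemma lsq_slope_error :
  s0 - s = (\sum_(j < n) (x j - xbar x n) * e j) / Sxx x n.
Proof.
have N2 := @lsq_first_order _ _ _ _ _ 0 1 lsq_min.
set S := Sxx x n; set xb := xbar x n.
set X1 := \sum_(j < n) x j; set X2 := \sum_(j < n) x j ^+ 2.
set E1 := \sum_(j < n) e j; set EX := \sum_(j < n) x j * e j.
have F2 : (L - b0) * X1 + (s - s0) * X2 + 1 * EX = 0.
  rewrite -[RHS]N2 -(sum_lin3 _ _ _ _ x (fun j => x j ^+ 2) (fun j => x j * e j)).
  by apply: eq_bigr => j _ /=; ring.
have F3 : S = 1 * X2 + (-2 * xb) * X1 + xb ^+ 2 * n%:R.
  rewrite -sum1_ord -(sum_lin3 _ _ _ _ (fun j => x j ^+ 2) x (fun j => 1)) /S /Sxx /xb.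
  by apply: eq_bigr => j _ /=; ring.
have F4 : \sum_(j < n) (x j - xb) * e j = 1 * EX + (- xb) * E1 + 0 * E1.
  by rewrite -(sum_lin3 _ _ _ _ (fun j => x j * e j) e e); apply: eq_bigr => j _ /=; ring.
(* Subtract xb times the first normal equation from the second. *)
have key : (s - s0) * S + (EX - xb * E1) = 0.
  rewrite -[RHS](_ : (L - b0) * X1 + (s - s0) * X2 + 1 * EX
       - xb * ((L - b0) * n%:R + (s - s0) * X1 + 1 * E1) = 0); last first.
    by rewrite lsq_mean_eq F2 mulr0 subrr.
  by rewrite F3 /xb /xbar -/X1; field.
have S_neq0 : S != 0 by rewrite gt_eqF.
rewrite F4; apply: (mulIf S_neq0); rewrite divfK //.
apply/eqP; rewrite -subr_eq0; apply/eqP.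
transitivity (- ((s - s0) * S + (EX - xb * E1))); first ring.
by rewrite key oppr0.
Qed.

Lemma lsq_intercept_error :
  b0 - L = \sum_(j < n) intercept_weight x n j * e j.
Proof.
have mean : b0 - L = (s - s0) * xbar x n + (\sum_(j < n) e j) / n%:R.
  apply: (mulIf n_neq0); apply/eqP; rewrite -subr_eq0; apply/eqP.
  transitivity
    (- ((L - b0) * n%:R + (s - s0) * \sum_(j < n) x j + 1 * \sum_(j < n) e j)).
    by rewrite /xbar; field.
  by rewrite lsq_mean_eq oppr0.
have -> : \sum_(j < n) intercept_weight x n j * e j =
    n%:R^-1 * \sum_(j < n) e j - xbar x n / Sxx x n * \sum_(j < n) (x j - xbar x n) * e j.
  by rewrite !mulr_sumr -sumrB; apply: eq_bigr => j _; rewrite /intercept_weight; ring.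
rewrite mean -[s - s0]opprB lsq_slope_error.
by field; rewrite n_neq0 gt_eqF.
Qed.

End Errors.

Lemma sum_intercept_weight_sqr_le x n : (0 < n)%N -> 0 < Sxx x n ->
  \sum_(j < n) intercept_weight x n j ^+ 2 <= 2 / n%:R + 2 * (xbar x n ^+ 2 / Sxx x n).
Proof.
move=> n0 S0; rewrite /intercept_weight; set S := Sxx x n in S0 *.
set xb := xbar x n.
have nn0 : (n%:R : R) != 0 by rewrite pnatr_eq0 -lt0n.
apply: (@le_trans _ _ (\sum_(j < n)
    (2 * n%:R^-1 ^+ 2 * 1 + 2 * (xb / S) ^+ 2 * (x j - xb) ^+ 2))).
  apply: ler_sum => j _; set u := n%:R^-1; set v := xb * (x j - xb) / S.
  have -> : 2 * u ^+ 2 * 1 + 2 * (xb / S) ^+ 2 * (x j - xb) ^+ 2 =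
            2 * u ^+ 2 + 2 * v ^+ 2.
    by rewrite /v; field; rewrite gt_eqF.
  have := sqr_ge0 (u + v); nra.
rewrite big_split /= -!mulr_sumr sum1_ord -/(Sxx x n) -/S.
have -> : 2 * n%:R^-1 ^+ 2 * n%:R = 2 / (n%:R : R) by field.
have -> : 2 * (xb / S) ^+ 2 * S = 2 * (xb ^+ 2 / S) by field; rewrite gt_eqF.
by [].
Qed.

End LeastSquares.

Arguments lsq_slope_error {R x e n L s b0 s0}.
Arguments lsq_intercept_error {R x e n L s b0 s0}.

Lemma expR_lnD_dist_le (R : realType) (M e D : R) : 0 < M -> 0 < e ->
  `|D| <= ln (1 + e / M) -> `|expR (ln M + D) - M| <= e.
Proof.
move=> M0 e0 hD; set q := e / M.
have q0 : 0 < q by rewrite divr_gt0.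
have eE : e = M * q by rewrite /q mulrC divfK // gt_eqF.
rewrite expRD lnK ?posrE //.
have h1 : expR D <= 1 + q.
  rewrite -[X in _ <= X]lnK ?posrE; last by lra.
  by rewrite ler_expR; apply: le_trans hD; rewrite ler_norm.
have h2 : (1 + q)^-1 <= expR D.
  rewrite -[X in X <= _]lnK ?posrE ?invr_gt0; last by lra.
  rewrite ler_expR lnV ?posrE; last by lra.
  by rewrite lerNl; apply: le_trans hD; rewrite -normrN ler_norm.
have h3 : 1 - q <= (1 + q)^-1.
  by rewrite -[X in _ <= X]mul1r ler_pdivlMr; [nra | lra].
rewrite ler_norml eE; apply/andP; split; nra.
Qed.

Section LeastSquaresTails.
Context d (T : measurableType d) (R : realType) (P : probability T R).
Variables (delta : nat -> {RV P >-> R}) (x : nat -> R) (L s C : R).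
Variables (betahat shat : nat -> T -> R).
Hypothesis delta_L2 : forall j, (delta j : T -> R) \in Lfun P 2%:E.
Hypothesis delta_centered : forall j, ('E_P[delta j] = 0)%E.
Hypothesis C_ge0 : 0 <= C.
Hypothesis cov_eigen_le : forall n b,
  eigenvalue (cov_matrix P (fun j => delta j : T -> R) n) b -> b <= C.
Hypothesis lsq_min : forall n w b s',
  lsq_obj x (fun j => L + s * x j + delta j w) n (betahat n w) (shat n w)
    <= lsq_obj x (fun j => L + s * x j + delta j w) n b s'.

Lemma slope_tail_le n (e : R) : (0 < n)%N -> 0 < e -> 0 < Sxx x n ->
  (P [set w | (e < `|shat n w - s|)%R] <= (C / e ^+ 2 * (Sxx x n)^-1)%:E)%E.
Proof.
move=> n0 e0 S0.
have -> : [set w | e < `|shat n w - s|] =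
    [set w | e * Sxx x n < `|noise_comb delta n (fun j => x j - xbar x n) w|].
  apply/seteqP; split => w /=;
  rewrite (lsq_slope_error n0 S0 (lsq_min n w));
  by rewrite normrM normfV (ger0_norm (ltW S0)) ltr_pdivlMr.
have eS0 : 0 < e * Sxx x n by rewrite mulr_gt0.
apply: le_trans (chebyshev_noise_comb delta_L2 delta_centered _ eS0 (cov_eigen_le n)) _.
rewrite lee_fin -/(Sxx x n).
rewrite (_ : (e * Sxx x n) ^- 2 * _ = C / e ^+ 2 * (Sxx x n)^-1) //.
by field; rewrite !gt_eqF.
Qed.

Lemma betahat_noise n : (0 < n)%N -> 0 < Sxx x n ->
  betahat n = fun w => L + noise_comb delta n (intercept_weight x n) w.
Proof.
move=> n0 S0; apply/funext => w; rewrite /noise_comb.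
rewrite -(lsq_intercept_error n0 S0 (lsq_min n w)).
by rewrite addrC subrK.
Qed.

Lemma intercept_tail_le n (e : R) : (0 < n)%N -> 0 < e -> 0 < Sxx x n ->
  (P [set w | (e < `|betahat n w - L|)%R] <=
    (C / e ^+ 2 * (2 / n%:R + 2 * (xbar x n ^+ 2 / Sxx x n)))%:E)%E.
Proof.
move=> n0 e0 S0; rewrite betahat_noise //.
under eq_set do rewrite addrC addKr.
apply: le_trans (chebyshev_noise_comb delta_L2 delta_centered _ e0 (cov_eigen_le n)) _.
rewrite lee_fin mulrCA -[X in _ <= X]mulrA; apply: ler_wpM2l => //.
apply: ler_wpM2l; first by rewrite invr_ge0 exprn_ge0 ?ltW.
exact: sum_intercept_weight_sqr_le.
Qed.

Lemma content_tail_le n (M e : R) : L = ln M -> 0 < M -> (0 < n)%N -> 0 < e ->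
  0 < Sxx x n ->
  (P [set w | (e < `|expR (betahat n w) - M|)%R] <=
    (C / ln (1 + e / M) ^+ 2 * (2 / n%:R + 2 * (xbar x n ^+ 2 / Sxx x n)))%:E)%E.
Proof.
move=> LE M0 n0 e0 S0.
have eta0 : 0 < ln (1 + e / M) by rewrite ln_gt0 // ltrDl divr_gt0.
apply: le_trans; last exact: (intercept_tail_le n _ n0 eta0 S0).
apply: le_measure; rewrite ?inE.
- rewrite betahat_noise //; apply: measurable_normr_gtr_set.
  apply: measurable_funB => //; apply: measurableT_comp => //.
  by apply: measurable_funD => //; exact: measurable_noise_comb.
- rewrite betahat_noise //; apply: measurable_normr_gtr_set.
  apply: measurable_funB => //.
  by apply: measurable_funD => //; exact: measurable_noise_comb.
- move=> w /=; apply: contraTT; rewrite -!leNgt LE => hle.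
  by rewrite -[betahat n w](subrK (ln M)) [_ + ln M]addrC expR_lnD_dist_le.
Qed.

End LeastSquaresTails.

Arguments slope_tail_le {d T R P delta x L s C betahat shat} _ _ _ _ {n e}.
Arguments content_tail_le {d T R P delta x L s C betahat shat} _ _ _ _ _ {n M e}.

Section Rates.
Context {R : realType}.
Implicit Types (r g a mu cS S xb Cx : R).

Lemma rate_exponent_le g mu : 1 - Num.max g mu - 2 * Num.max 0 (mu - g) <= 1 - mu.
Proof.
have : mu <= Num.max g mu by rewrite le_max lexx orbT.
have : 0 <= Num.max 0 (mu - g) by rewrite le_max lexx.
lra.
Qed.

Lemma powR_ge1 r g : 1 <= r -> 0 <= g -> 1 <= r `^ g.
Proof. by move=> r1 g0; rewrite -(powRr0 r); apply: ler_powR. Qed.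

Lemma invr_le_powRN r a : 1 <= r -> a <= 1 -> r^-1 <= r `^ (- a).
Proof.
move=> r1 a1; rewrite -powR_inv1; last by lra.
by apply: ler_powR => //; lra.
Qed.

Lemma Sxx_inv_le r g a cS S : 0 < cS -> 1 <= r -> 0 <= g -> a <= 1 ->
  cS * r * r `^ g <= S -> S^-1 <= cS^-1 * r `^ (- a).
Proof.
move=> cS0 r1 g0 a1 HS; have r0 : 0 < r by lra.
have crS : cS * r <= S.
  apply: le_trans HS; rewrite ler_peMr ?powR_ge1 //.
  by rewrite mulr_ge0 ?ltW.
have S0 : 0 < S by apply: lt_le_trans crS; rewrite mulr_gt0.
apply: (@le_trans _ _ (cS^-1 * r^-1)).
  by rewrite -invfM lef_pV2 ?posrE ?mulr_gt0.
apply: ler_wpM2l; [by rewrite invr_ge0 ltW | exact: invr_le_powRN].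
Qed.

Lemma xbar_sqr_div_le r g a mu cS S xb Cx : 0 < cS -> 1 <= r -> 0 <= g ->
  a <= 1 - mu -> cS * r * r `^ g <= S -> `|xb| <= Cx * r `^ (mu / 2) ->
  xb ^+ 2 / S <= Cx ^+ 2 / cS * r `^ (- a).
Proof.
move=> cS0 r1 g0 amu HS Hx; have r0 : 0 < r by lra.
have xb2 : xb ^+ 2 <= Cx ^+ 2 * r `^ mu.
  have -> : r `^ mu = (r `^ (mu / 2)) ^+ 2.
    by rewrite -powR_mulrn ?powR_ge0 // -powRrM; congr (_ `^ _); field.
  rewrite -exprMn -real_normK ?num_real //; apply: lerXn2r => //;
    rewrite ?nnegrE ?normr_ge0 //; exact: le_trans (normr_ge0 _) Hx.
have S0 : 0 < S by apply: lt_le_trans HS; rewrite !mulr_gt0 ?powR_gt0.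
have Sinv : S^-1 <= cS^-1 * r `^ (- 1) by exact: Sxx_inv_le g0 (lexx 1) HS.
have rmu : r `^ mu * r `^ (- 1) <= r `^ (- a).
  rewrite -powRD; last by apply/implyP => _; rewrite gt_eqF.
  by apply: ler_powR => //; lra.
have Sinv0 : 0 <= S^-1 by rewrite invr_ge0 ltW.
apply: le_trans (ler_pM (sqr_ge0 xb) Sinv0 xb2 Sinv) _.
rewrite mulrACA; apply: ler_wpM2l rmu.
by rewrite divr_ge0 ?sqr_ge0 ?ltW.
Qed.

End Rates.

Theorem mainTheorem7 (R : realType) (d : nat) (F : set 'rV[R]_d) (s M : R)
  (dT : measure_display) (T : measurableType dT) (P : probability T R)
  (eps : nat -> R) (delta : nat -> {RV P >-> R}) (gamma mu : R)
  (betahat shat : nat -> T -> R) :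
  bounded_Rd F ->
  minkowski_dim F s ->
  minkowski_content F s M -> 0 < M ->
  (forall j, 0 < eps j) -> (forall j, eps j.+1 < eps j) ->
  (forall j, ('E_P[delta j])%E = 0%E) ->
  (forall j, (delta j : T -> R) \in Lfun P 2%:E) ->
  (forall j, (0 < 'V_P[delta j])%E) ->
  (exists c : R, 0 < c /\ forall n a,
      eigenvalue (cov_matrix P (fun j => delta j) n) a -> c <= a) ->
  (exists C : R, forall n a,
      eigenvalue (cov_matrix P (fun j => delta j) n) a -> a <= C) ->
  let x := fun j => - ln (eps j) in
  let y := fun j (w : T) => ln M + s * x j + delta j w in
  0 <= gamma -> 0 <= mu ->
  (exists c C : R, exists N : nat, 0 < c /\ 0 < C /\ forall n, (N <= n)%N ->
      c * n%:R `^ gamma <= S2tilde x n <= C * n%:R `^ gamma) ->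
  (exists C : R, exists N : nat, forall n, (N <= n)%N ->
      `|xbar x n| <= C * n%:R `^ (mu / 2)) ->
  let alpha := 1 - Num.max gamma mu - 2 * Num.max 0 (mu - gamma) in
  0 < alpha ->
  (forall n w beta s',
      lsq_obj x (fun j => y j w) n (betahat n w) (shat n w)
        <= lsq_obj x (fun j => y j w) n beta s') ->
  forall e : R, 0 < e ->
    (exists C : R, exists N : nat, forall n, (N <= n)%N ->
       (P [set w | (e < `|shat n w - s|)%R] <= (C * n%:R `^ (- alpha))%:E)%E) /\
    (exists C : R, exists N : nat, forall n, (N <= n)%N ->
       (P [set w | (e < `|expR (betahat n w) - M|)%R] <= (C * n%:R `^ (- alpha))%:E)%E).
Proof.
move=> _ _ _ M0 _ _ mean0 L2 _ _ [Cq HCq] x y g0 mu0.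
move=> [cS [CS [N1 [cS0 [_ HS]]]]] [Cx [N2 Hx]] alpha _ lsq_min e e0.
pose C := Num.max Cq 1.
have C_ge0 : 0 <= C by rewrite le_max ler01 orbT.
have HC n b : eigenvalue (cov_matrix P (fun j => delta j : T -> R) n) b -> b <= C.
  by move=> /HCq h; rewrite le_max h.
have al_mu : alpha <= 1 - mu by exact: rate_exponent_le.
have al1 : alpha <= 1 by lra.
pose N := maxn 1 (maxn N1 N2).
have large n : (N <= n)%N -> [/\ 1 <= n%:R :> R, (0 < n)%N, (N1 <= n)%N & (N2 <= n)%N].
  by rewrite /N !geq_max ler1n => /andP[-> /andP[-> ->]].
have Sxx_ge n : (N <= n)%N -> 0 < cS * n%:R * n%:R `^ gamma <= Sxx x n.
  by move=> /large[_ n0 /HS/andP[h _] _]; exact: Sxx_growth n0 cS0 h.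
split; [exists (C / e ^+ 2 * cS^-1) |
        exists (C / ln (1 + e / M) ^+ 2 * (2 + 2 * (Cx ^+ 2 / cS)))];
  exists N => n nN; have [n1 n0 _ nN2] := large n nN;
  have /andP[c0 S_ge] := Sxx_ge n nN; have S0 := lt_le_trans c0 S_ge.
- apply: le_trans (slope_tail_le (L := ln M) (s := s) L2 mean0 HC lsq_min n0 e0 S0) _.
  rewrite lee_fin -[X in _ <= X]mulrA; apply: ler_wpM2l; first by rewrite divr_ge0 ?sqr_ge0.
  exact: Sxx_inv_le g0 al1 S_ge.
- apply: le_trans (content_tail_le (L := ln M) (s := s) L2 mean0 C_ge0 HC lsq_min
    erefl M0 n0 e0 S0) _.
  rewrite lee_fin -[X in _ <= X]mulrA; apply: ler_wpM2l; first by rewrite divr_ge0 ?sqr_ge0.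
  rewrite [X in _ <= X]mulrDl -[X in _ <= _ + X]mulrA.
  apply: lerD; apply: ler_wpM2l => //; first exact: invr_le_powRN.
  exact: xbar_sqr_div_le g0 al_mu S_ge (Hx n nN2).
Qed.
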